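(* Let $G=(V,E)$ be a disk triangulation graph with base vertex $v_0$. For every integer $n>0$, the outer sphere $S_{\mathcal O}(n)$ is a cycle graph.
   Context: A disk triangulation graph is the 1-skeleton of a locally finite triangulation of the open unit disk (simple, connected). The norm $|v|$ of a vertex is its graph distance from $v_0$. The outer sphere of radius $n$, $S_{\mathcal O}(n)$, is the graph whose vertices are those $v$ with $|v|=n$ for which there exists a path from $v$ to infinity containing no other vertex of norm $n$, and whose edges are the edges of $E$ with both endpoints in this vertex set. A cycle graph is a finite connected graph all of whose vertices have degree two. *)

From Stdlib Require Import List Relations Arith.
Import ListNotations.

Section Defs.
Variable V : Type.
Variable adj : V -> V -> Prop.
Variable tri : V -> V -> V -> Prop.      (* the 2-simplices (faces) *)

Fixpoint walk (l : list V) : Prop :=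
  match l with
  | x :: ((y :: _) as t) => adj x y /\ walk t
  | _ => True
  end.

Inductive walk_move : list V -> list V -> Prop :=
  | move_backtrack (l1 l2 : list V) (u w : V) :
      adj u w -> walk_move (l1 ++ [u] ++ l2) (l1 ++ [u; w; u] ++ l2)
  | move_triangle (l1 l2 : list V) (u x w : V) :
      tri u x w -> walk_move (l1 ++ [u; w] ++ l2) (l1 ++ [u; x; w] ++ l2).

Definition walk_homotopic : list V -> list V -> Prop :=
  clos_refl_sym_trans (list V) walk_move.

Inductive within : nat -> V -> V -> Prop :=
  | within_refl n x : within n x x
  | within_step n x y z : adj x y -> within n y z -> within (S n) x z.

(** [disk_triangulation adj tri]: (adj,tri) is the 1-skeleton and face set of a
    locally finite triangulation of the open disk (= simply connected,
    non-compact surface without boundary), described combinatorially. *)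
Definition disk_triangulation : Prop :=
  (forall x y, adj x y -> adj y x) /\
  (forall x, ~ adj x x) /\
  (forall a b c, tri a b c -> adj a b /\ adj b c /\ adj a c) /\
  (forall a b c, tri a b c -> tri b a c /\ tri a c b) /\
  (* every edge lies in exactly two faces (surface without boundary) *)
  (forall a b, adj a b -> exists c d, c <> d /\ tri a b c /\ tri a b d /\
      forall e, tri a b e -> e = c \/ e = d) /\
  (forall v, exists l : list V, forall w, adj v w <-> In w l) /\
  (* the link of every vertex is a single cycle (connected) *)
  (forall v u w, adj v u -> adj v w ->
      clos_refl_trans V (fun a b => tri v a b) u w) /\
  (exists v : V, True) /\
  (forall x y, exists n, within n x y) /\
  (* infinite (non-compact) *)
  (forall l : list V, exists v, ~ In v l) /\
  (forall v l, walk (v :: l ++ [v]) -> walk_homotopic (v :: l ++ [v]) [v]).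

Definition norm (v0 v : V) (n : nat) : Prop :=
  within n v0 v /\ forall m, m < n -> ~ within m v0 v.

Definition outer_sphere (v0 : V) (n : nat) (v : V) : Prop :=
  norm v0 v n /\
  exists p : nat -> V,
    p 0 = v /\
    (forall i j, p i = p j -> i = j) /\
    (forall i, adj (p i) (p (S i))) /\
    (forall i, 0 < i -> ~ norm v0 (p i) n).

Definition induced_cycle_graph (S : V -> Prop) : Prop :=
  (exists l : list V, forall v, S v <-> In v l) /\
  (exists v, S v) /\
  (forall x y, S x -> S y ->
     exists l, walk (x :: l) /\ last l x = y /\ Forall S l) /\
  (forall v, S v -> exists a b, a <> b /\ adj v a /\ adj v b /\ S a /\ S b /\
     forall c, adj v c -> S c -> c = a \/ c = b).

End Defs.

Arguments walk {V}. Arguments walk_homotopic {V}. Arguments within {V}.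
Arguments disk_triangulation {V}. Arguments norm {V}.
Arguments outer_sphere {V}. Arguments induced_cycle_graph {V}.

(* The outer sphere S_O(n) lies in the finite ball of radius n, and it is
   nonempty because Koenig's lemma gives a geodesic ray from v0.

   Every closed walk bounds a mod-2 2-chain: the disk is simply connected and
   homotopy moves preserve this property.  A vertex off the walk is then inside
   or outside the chain, and a vertex joined off the walk to an infinite ray is
   outside.

   Call a vertex escaping if a ray of norms > n starts at it.  The link of an
   outer vertex v is a cycle; listed from an escaping neighbour, its
   non-escaping neighbours form an arc whose two ends lie on S_O(n).  Closing
   this arc by a loop through v0 traps every other neighbour of v inside, so v
   has exactly two outer neighbours.  Finally, the cycle of S_O(n) through v
   traps the lower neighbour of v, which is joined through v0 to every other
   outer vertex, hence to an escaping vertex: so that cycle is all of S_O(n). *)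

From Stdlib Require Import List Relations Arith Lia Classical ClassicalEpsilon Bool FinFun.
Import ListNotations.

Lemma ex_least (P : nat -> Prop) :
  (exists k, P k) -> exists k, P k /\ forall m, m < k -> ~ P m.
Proof.
  intros [k Hk]. induction k as [k IH] using lt_wf_ind.
  destruct (classic (exists m, m < k /\ P m)) as [[m [Hm Pm]]|H].
  - exact (IH m Hm Pm).
  - exists k; split; auto. intros m Hm Pm; apply H; eauto.
Qed.

Lemma ex_greatest_below (P : nat -> Prop) j :
  (exists t, t < j /\ P t) -> exists a, a < j /\ P a /\ forall t, a < t < j -> ~ P t.
Proof.
  induction j as [|j IH]; intros [t [Ht Pt]]; [lia|].
  destruct (classic (P j)) as [Pj|Pj].
  - exists j. repeat split; auto. lia.
  - destruct IH as [a [Ha [Pa Hmax]]].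
    + exists t. split; auto. assert (t <> j) by (intros ->; contradiction). lia.
    + exists a. repeat split; auto. intros t' Ht'.
      destruct (Nat.eq_dec t' j) as [->|]; auto. apply Hmax; lia.
Qed.

Lemma injective_not_in_list (A : Type) (p : nat -> A) (l : list A) :
  (forall i j, p i = p j -> i = j) -> ~ (forall i, In (p i) l).
Proof.
  intros Hinj Hl.
  assert (H : NoDup (map p (seq 0 (S (length l))))).
  { apply Injective_map_NoDup; [intros x y; apply Hinj | apply seq_NoDup]. }
  apply NoDup_incl_length with (l' := l) in H.
  - rewrite length_map, length_seq in H; lia.
  - intros x Hx. apply in_map_iff in Hx as [i [<- _]]. auto.
Qed.

Lemma list_uniform_bound (A : Type) (B : A -> nat -> Prop) (l : list A) :
  (forall x k k', B x k -> k <= k' -> B x k') ->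
  (forall x, In x l -> exists k, B x k) -> exists K, forall x, In x l -> B x K.
Proof.
  intros Hmono. induction l as [|a l IH]; intro Hl.
  - exists 0; intros x [].
  - destruct IH as [K HK]; [intros x Hx; apply Hl; simpl; auto|].
    destruct (Hl a (or_introl eq_refl)) as [k Hk].
    exists (Nat.max k K). intros x [<-|Hx]; eapply Hmono; eauto; lia.
Qed.

Lemma level_crossing (f : nat -> nat) n :
  (forall i, f (S i) <= S (f i) /\ f i <= S (f (S i))) -> (forall i, f i <> n) ->
  (n < f 0 -> forall i, n < f i) /\ (f 0 < n -> forall i, f i < n).
Proof.
  intros Hstep Hne. split; intros H0 i; induction i; auto;
    specialize (Hstep i); specialize (Hne (S i)); lia.
Qed.

Section TwoRegular.
Variables (V : Type) (P : V -> Prop) (R : V -> V -> Prop).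

Record cycle_of (s : nat -> V) (j : nat) : Prop := {
  cycle_len : 3 <= j;
  cycle_in : forall t, P (s t);
  cycle_step : forall t, R (s t) (s (S t));
  cycle_nobacktrack : forall t, s (S (S t)) <> s t;
  cycle_period : forall t, s (t + j) = s t;
  cycle_inj : forall t t', t < j -> t' < j -> s t = s t' -> t = t';
  cycle_closed : forall t y, R (s t) y -> P y -> exists t', t' < j /\ s t' = y }.

Hypothesis R_sym : forall x y, R x y -> R y x.
Hypothesis R_irrefl : forall x, ~ R x x.
Hypothesis P_finite : exists l, forall x, P x -> In x l.
Hypothesis two_regular : forall x, P x -> exists a b, a <> b /\ R x a /\ R x b /\ P a /\ P b /\
  forall c, R x c -> P c -> c = a \/ c = b.

Lemma two_regular_other x y1 y2 : P x -> R x y1 -> R x y2 -> P y1 -> P y2 -> y1 <> y2 ->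
  forall c, R x c -> P c -> c = y1 \/ c = y2.
Proof.
  intros Px R1 R2 P1 P2 H12 c Rc Pc.
  destruct (two_regular x Px) as [a [b [Hab [Ra [Rb [Pa [Pb H]]]]]]].
  destruct (H _ R1 P1), (H _ R2 P2), (H _ Rc Pc); subst; auto; congruence.
Qed.

Definition cycle_next (p c : V) : V := epsilon (inhabits c) (fun y => R c y /\ P y /\ y <> p).

Lemma cycle_next_spec p c : P c -> P p -> R c p ->
  R c (cycle_next p c) /\ P (cycle_next p c) /\ cycle_next p c <> p.
Proof.
  intros Pc Pp Rcp. unfold cycle_next. apply epsilon_spec.
  destruct (two_regular c Pc) as [a [b [Hab [Ra [Rb [Pa [Pb _]]]]]]].
  destruct (classic (a = p)) as [->|Hap]; eauto.
Qed.

Variables x0 x1 : V.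
Hypotheses (P_x0 : P x0) (P_x1 : P x1) (R_x0x1 : R x0 x1).

Fixpoint cycle_pairs (k : nat) : V * V :=
  match k with
  | 0 => (x0, x1)
  | S k => (snd (cycle_pairs k), cycle_next (fst (cycle_pairs k)) (snd (cycle_pairs k)))
  end.

Definition cycle_seq (k : nat) : V := fst (cycle_pairs k).

Lemma cycle_seq_SS k : cycle_seq (S (S k)) = cycle_next (cycle_seq k) (cycle_seq (S k)).
Proof. reflexivity. Qed.

Lemma cycle_seq_step k :
  P (cycle_seq k) /\ P (cycle_seq (S k)) /\ R (cycle_seq k) (cycle_seq (S k)).
Proof.
  induction k as [|k [H1 [H2 H3]]]; [simpl; auto|].
  destruct (cycle_next_spec _ _ H2 H1 (R_sym _ _ H3)) as [A [B _]].
  rewrite cycle_seq_SS. auto.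
Qed.

Lemma cycle_seq_nobacktrack k : cycle_seq (S (S k)) <> cycle_seq k.
Proof.
  destruct (cycle_seq_step k) as [H1 [H2 H3]].
  rewrite cycle_seq_SS. apply (cycle_next_spec _ _ H2 H1 (R_sym _ _ H3)).
Qed.

Lemma cycle_seq_neighbours k c : R (cycle_seq (S k)) c -> P c ->
  c = cycle_seq k \/ c = cycle_seq (S (S k)).
Proof.
  destruct (cycle_seq_step k) as [H1 [H2 H3]]. destruct (cycle_seq_step (S k)) as [_ [H4 H5]].
  apply two_regular_other; auto. apply not_eq_sym, cycle_seq_nobacktrack.
Qed.

(* The first repetition of the non-backtracking walk returns to its start, since
   a repeated interior vertex would force a repeated predecessor. *)
Lemma cycle_seq_first_return : exists j, 3 <= j /\ cycle_seq j = x0 /\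
  (forall t t', t < j -> t' < j -> cycle_seq t = cycle_seq t' -> t = t').
Proof.
  destruct P_finite as [l Hl].
  assert (Hrep : exists j i, i < j /\ cycle_seq i = cycle_seq j).
  { apply NNPP. intro H. apply (injective_not_in_list _ cycle_seq l).
    - intros i j E. destruct (lt_eq_lt_dec i j) as [[Hij|Hij]|Hij]; auto;
        exfalso; apply H; eauto.
    - intro i. apply Hl, cycle_seq_step. }
  destruct (ex_least _ Hrep) as [j [[i [Hij E]] Hmin]].
  assert (Hinj : forall t t', t < j -> t' < j -> cycle_seq t = cycle_seq t' -> t = t').
  { intros t t' Ht Ht' Et. destruct (lt_eq_lt_dec t t') as [[H|H]|H]; auto;
      exfalso; [apply (Hmin t')|apply (Hmin t)]; eauto. }
  assert (i = 0) as ->.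
  { destruct i as [|i]; auto. exfalso. destruct j as [|j]; [lia|].
    destruct (cycle_seq_step j) as [Pj [_ Rj]]. rewrite <- E in Rj.
    destruct (cycle_seq_neighbours i _ (R_sym _ _ Rj) Pj) as [F|F].
    - apply (Hmin j); [lia|]. exists i. split; [lia|congruence].
    - destruct (lt_eq_lt_dec (S (S i)) j) as [[H|H]|H].
      + apply (Hmin j); [lia|]. exists (S (S i)). split; [lia|congruence].
      + subst j. apply (cycle_seq_nobacktrack (S i)). rewrite <- E. reflexivity.
      + assert (j = S i) as -> by lia. exact (R_irrefl _ Rj). }
  exists j. repeat split; auto.
  destruct j as [|[|[|j]]]; try lia.
  - exfalso. apply (R_irrefl x0). change x0 with (cycle_seq 0) at 2. rewrite E. apply R_x0x1.
  - exfalso. apply (cycle_seq_nobacktrack 0). auto.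
Qed.

Lemma cycle_seq_period j : 3 <= j -> cycle_seq j = x0 ->
  (forall t t', t < j -> t' < j -> cycle_seq t = cycle_seq t' -> t = t') ->
  forall t, cycle_seq (t + j) = cycle_seq t.
Proof.
  intros Hj Ej Hinj.
  assert (E1 : cycle_seq (S j) = x1).
  { destruct j as [|[|[|k]]]; try lia.
    rewrite cycle_seq_SS, Ej.
    destruct (cycle_seq_step (S (S k))) as [A1 [_ A3]]. rewrite Ej in A3.
    destruct (cycle_next_spec _ _ P_x0 A1 (R_sym _ _ A3)) as [B1 [B2 B3]].
    assert (Hne : x1 <> cycle_seq (S (S k))).
    { intro E. change x1 with (cycle_seq 1) in E. apply Hinj in E; lia. }
    destruct (two_regular_other x0 x1 (cycle_seq (S (S k))) P_x0 R_x0x1 (R_sym _ _ A3)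
      P_x1 A1 Hne _ B1 B2); auto. contradiction. }
  assert (K : forall t, cycle_seq (t + j) = cycle_seq t /\ cycle_seq (S t + j) = cycle_seq (S t)).
  { induction t as [|t [IH1 IH2]]; [split; auto|].
    split; auto. simpl plus in *. rewrite cycle_seq_SS, IH1, IH2. reflexivity. }
  intro t; apply K.
Qed.

Lemma two_regular_cycle : exists s j, s 0 = x0 /\ cycle_of s j.
Proof.
  destruct cycle_seq_first_return as [j [Hj [Ej Hinj]]].
  pose proof (cycle_seq_period j Hj Ej Hinj) as Per.
  assert (Red : forall t, exists t', t' < j /\ cycle_seq t' = cycle_seq t).
  { intro t. induction t as [t IH] using lt_wf_ind.
    destruct (le_lt_dec j t) as [H|H]; eauto.
    destruct (IH (t - j)) as [t' [H1 H2]]; [lia|]. exists t'. split; auto.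
    rewrite H2, <- (Per (t - j)). f_equal. lia. }
  exists cycle_seq, j. split; [reflexivity|]. constructor; auto.
  - intro t; apply cycle_seq_step.
  - intro t; apply cycle_seq_step.
  - exact cycle_seq_nobacktrack.
  - intros t y Rt Py. rewrite <- Per in Rt.
    destruct (t + j) as [|m] eqn:Em; [lia|].
    destruct (cycle_seq_neighbours m y Rt Py) as [->| ->]; apply Red.
Qed.

End TwoRegular.

Arguments cycle_of {V} P R s j.
Arguments cycle_len {V P R s j}. Arguments cycle_in {V P R s j}.
Arguments cycle_step {V P R s j}. Arguments cycle_nobacktrack {V P R s j}.
Arguments cycle_period {V P R s j}. Arguments cycle_inj {V P R s j}.
Arguments cycle_closed {V P R s j}.

Section DiskTriangulation.
Variables (V : Type) (adj : V -> V -> Prop) (tri : V -> V -> V -> Prop).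
Hypothesis adj_sym : forall x y, adj x y -> adj y x.
Hypothesis adj_irrefl : forall x, ~ adj x x.
Hypothesis face_edges : forall a b c, tri a b c -> adj a b /\ adj b c /\ adj a c.
Hypothesis face_perm : forall a b c, tri a b c -> tri b a c /\ tri a c b.
Hypothesis edge_faces : forall a b, adj a b -> exists c d, c <> d /\ tri a b c /\ tri a b d /\
  forall e, tri a b e -> e = c \/ e = d.
Hypothesis locally_finite : forall v, exists l, forall w, adj v w <-> In w l.
Hypothesis link_connected : forall v u w, adj v u -> adj v w ->
  clos_refl_trans V (fun a b => tri v a b) u w.
Hypothesis connected : forall x y, exists n, within adj n x y.
Hypothesis infinite : forall l : list V, exists v, ~ In v l.
Hypothesis simply_connected : forall v l,
  walk adj (v :: l ++ [v]) -> walk_homotopic adj tri (v :: l ++ [v]) [v].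

(** * Walks *)

Definition ray (p : nat -> V) : Prop :=
  (forall i j, p i = p j -> i = j) /\ (forall i, adj (p i) (p (S i))).

Lemma within_mono m x y : within adj m x y -> forall k, m <= k -> within adj k x y.
Proof.
  induction 1; intros k Hk; [constructor|].
  destruct k; [lia|]. econstructor; eauto. apply IHwithin; lia.
Qed.

Lemma within_snoc m x y z : within adj m x y -> adj y z -> within adj (S m) x z.
Proof.
  induction 1; intro Hz.
  - econstructor; eauto. constructor.
  - econstructor; eauto.
Qed.

Lemma within_sym m x y : within adj m x y -> within adj m y x.
Proof. induction 1; [constructor|]. apply within_snoc with y; auto. Qed.

Lemma within_app a b x y z :
  within adj a x y -> within adj b y z -> within adj (a + b) x z.
Proof.
  induction 1; intro Hyz.
  - apply within_mono with b; auto; lia.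
  - simpl. econstructor; eauto.
Qed.

Lemma within_split k x z : within adj k x z -> forall k', k' <= k ->
  exists y, within adj k' x y /\ within adj (k - k') y z.
Proof.
  induction 1 as [k x|k x y z Hxy Hyz IH]; intros k' Hk.
  - exists x; split; constructor.
  - destruct k' as [|k'].
    + exists x; split; [constructor|]. econstructor; eauto.
    + destruct (IH k') as [w [H1 H2]]; [lia|].
      exists w; split; auto. econstructor; eauto.
Qed.

Lemma walk_app l1 u l2 :
  walk adj (l1 ++ [u]) -> walk adj (u :: l2) -> walk adj (l1 ++ u :: l2).
Proof.
  induction l1 as [|x [|y l1] IH]; intros W1 W2; auto.
  - destruct W1 as [A _]. split; auto.
  - destruct W1 as [A W1]. split; auto.
Qed.

Lemma walk_rev l : walk adj l -> walk adj (rev l).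
Proof.
  induction l as [|x [|y l] IH]; simpl; auto.
  intros [A W]. rewrite <- app_assoc. apply walk_app; [apply IH, W|]. split; auto. exact I.
Qed.

Lemma walk_map_seq (u : nat -> V) : (forall t, adj (u t) (u (S t))) ->
  forall m k, walk adj (map u (seq k (S m))).
Proof.
  intros A m. induction m as [|m IH]; intro k; [exact I|].
  change (walk adj (u k :: map u (seq (S k) (S m)))). split; [apply A | apply IH].
Qed.

Definition loop (v : V) (p : list V) : list V := v :: p ++ [v].

Lemma in_loop v p w : In w (loop v p) <-> w = v \/ In w p.
Proof. unfold loop. simpl. rewrite in_app_iff. simpl. intuition. Qed.

Lemma in_arc (a b w : V) M : In w (a :: M ++ [b]) <-> w = a \/ w = b \/ In w M.
Proof. simpl. rewrite in_app_iff. simpl. intuition. Qed.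

Lemma loop_walk v a M b : adj v a -> adj b v -> walk adj (a :: M ++ [b]) ->
  walk adj (loop v (a :: M ++ [b])).
Proof.
  intros A1 A2 W. split; auto.
  change (walk adj ((a :: M ++ [b]) ++ [v])).
  replace ((a :: M ++ [b]) ++ [v]) with ((a :: M) ++ [b; v])
    by (simpl; rewrite <- app_assoc; reflexivity).
  apply walk_app; [exact W | split; [auto | exact I]].
Qed.

Definition joined_within (P : V -> Prop) (x y : V) : Prop :=
  exists l, walk adj (x :: l) /\ last l x = y /\ Forall P l.

Lemma joined_within_seq (P : V -> Prop) (u : nat -> V) :
  (forall t, adj (u t) (u (S t))) -> (forall t, P (u t)) ->
  forall t, joined_within P (u 0) (u t).
Proof.
  intros A Pu t. exists (map u (seq 1 t)). split; [|split].
  - exact (walk_map_seq u A t 0).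
  - destruct t; [reflexivity|]. rewrite seq_S, map_app. apply last_last.
  - apply Forall_forall. intros w Hw. apply in_map_iff in Hw as [t' [<- _]]. apply Pu.
Qed.

Definition connected_off (g : list V) : V -> V -> Prop :=
  clos_refl_trans V (fun p q => adj p q /\ ~ In p g /\ ~ In q g).

Definition avoiding_ray (g : list V) (x : V) : Prop :=
  exists r, r 0 = x /\ ray r /\ forall i, ~ In (r i) g.

Lemma walk_connected_off g x l y : walk adj (x :: l ++ [y]) ->
  (forall z, In z (x :: l ++ [y]) -> ~ In z g) -> connected_off g x y.
Proof.
  revert x; induction l as [|z l IH]; intros x W H; simpl in *.
  - apply rt_step. destruct W as [A _]. repeat split; auto.
  - destruct W as [A W].
    apply rt_trans with z; [apply rt_step; repeat split; auto | apply IH; auto].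
Qed.

(** * Faces and mod-2 chains *)

Lemma face_swap12 a b c : tri a b c -> tri b a c.
Proof. intro H; apply face_perm in H; tauto. Qed.

Lemma face_swap23 a b c : tri a b c -> tri a c b.
Proof. intro H; apply face_perm in H; tauto. Qed.

Lemma face_swap13 a b c : tri a b c -> tri c b a.
Proof. intro H. apply face_swap12, face_swap23, face_swap12, H. Qed.

Lemma face_distinct a b c : tri a b c -> a <> b /\ b <> c /\ a <> c.
Proof.
  intro H. destruct (face_edges _ _ _ H) as [A [B C]].
  repeat split; intros ->; eapply adj_irrefl; eauto.
Qed.

Lemma face_of_edge x y : adj x y -> exists c, tri x y c.
Proof. intro H. destruct (edge_faces x y H) as [c [_ [_ [T _]]]]. eauto. Qed.

Lemma edge_faces_exact a b c d : tri a b c -> tri a b d -> c <> d ->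
  forall e, tri a b e -> e = c \/ e = d.
Proof.
  intros Tc Td Hcd e Te. destruct (edge_faces a b) as [c' [d' [_ [_ [_ H]]]]].
  - apply (face_edges _ _ _ Tc).
  - destruct (H _ Tc), (H _ Td), (H _ Te); subst; auto; congruence.
Qed.

Definition veqb (x y : V) : bool := if excluded_middle_informative (x = y) then true else false.

Lemma veqbP x y : reflect (x = y) (veqb x y).
Proof. unfold veqb; destruct (excluded_middle_informative (x = y)); constructor; auto. Qed.

Lemma veqb_refl x : veqb x x = true.
Proof. destruct (veqbP x x); congruence. Qed.

Lemma veqb_neq x y : x <> y -> veqb x y = false.
Proof. intro H; destruct (veqbP x y); congruence. Qed.

Ltac decide_veqb := repeat match goal with
  | |- context [veqb ?p ?p] => rewrite (veqb_refl p)
  | H : ?p <> ?q |- context [veqb ?p ?q] => rewrite (veqb_neq p q H)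
  | H : ?q <> ?p |- context [veqb ?p ?q] => rewrite (veqb_neq p q (not_eq_sym H))
  | |- context [veqb ?p ?q] => destruct (veqbP p q); [subst; try congruence|]
  end; simpl; try congruence; auto.

Definition edge_eqb (a b p q : V) : bool := (veqb a p && veqb b q) || (veqb a q && veqb b p).

Fixpoint edge_parity (a b : V) (l : list V) : bool :=
  match l with
  | x :: ((y :: _) as t) => xorb (edge_eqb a b x y) (edge_parity a b t)
  | _ => false
  end.

Lemma edge_parity_cons2 a b x y l :
  edge_parity a b (x :: y :: l) = xorb (edge_eqb a b x y) (edge_parity a b (y :: l)).
Proof. reflexivity. Qed.

Lemma edge_parity_app a b l1 u l2 :
  edge_parity a b (l1 ++ u :: l2) = xorb (edge_parity a b (l1 ++ [u])) (edge_parity a b (u :: l2)).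
Proof.
  induction l1 as [|x [|y l1] IH]; [reflexivity| |].
  - simpl app. rewrite edge_parity_cons2. simpl edge_parity at 2. now rewrite xorb_false_r.
  - simpl app in *. rewrite !edge_parity_cons2, IH, xorb_assoc. reflexivity.
Qed.

Lemma edge_parity_notin a b l : ~ In a l -> edge_parity a b l = false.
Proof.
  induction l as [|p [|q l] IH]; intro H; auto.
  rewrite edge_parity_cons2, IH by (intro; apply H; simpl; auto).
  unfold edge_eqb. rewrite (veqb_neq a p), (veqb_neq a q); auto;
    intro; apply H; simpl; auto.
Qed.

Lemma loop_edge_parity v a M b : ~ In v (a :: M ++ [b]) ->
  forall w, edge_parity v w (loop v (a :: M ++ [b])) = xorb (veqb w a) (veqb w b).
Proof.
  intros H w.
  assert (Ha : v <> a) by (intro E; apply H; left; auto).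
  assert (Hb : v <> b) by (intro E; apply H; right; apply in_or_app; right; left; auto).
  unfold loop. replace ((a :: M ++ [b]) ++ [v]) with ((a :: M) ++ b :: [v])
    by (simpl; rewrite <- app_assoc; reflexivity).
  change (v :: (a :: M) ++ b :: [v]) with (v :: a :: (M ++ b :: [v])).
  rewrite edge_parity_cons2.
  change (a :: M ++ b :: [v]) with ((a :: M) ++ b :: [v]).
  rewrite edge_parity_app, edge_parity_notin by exact H.
  rewrite edge_parity_cons2. simpl edge_parity.
  unfold edge_eqb. rewrite veqb_refl, (veqb_neq v a Ha), (veqb_neq v b Hb).
  destruct (veqb w a), (veqb w b); reflexivity.
Qed.

(* A mod-2 2-chain is a list of faces; the coefficient of the face {a, b, c}
   is the parity of its number of occurrences. *)
Definition in_face (a : V) (t : V * V * V) : bool :=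
  let '(u, x, w) := t in veqb a u || veqb a x || veqb a w.

Definition face_eqb (a b c : V) (t : V * V * V) : bool := in_face a t && in_face b t && in_face c t.

Fixpoint chain_coef (L : list (V * V * V)) (a b c : V) : bool :=
  match L with
  | [] => false
  | t :: L => xorb (face_eqb a b c t) (chain_coef L a b c)
  end.

(* Every edge ab lies in exactly two faces abc and abd, so the mod-2 boundary
   of L counts ab with the coefficient of abc plus that of abd. *)
Definition is_boundary (L : list (V * V * V)) (g : list V) : Prop :=
  forall a b c d, tri a b c -> tri a b d -> c <> d ->
    edge_parity a b g = xorb (chain_coef L a b c) (chain_coef L a b d).

Definition null_homologous (g : list V) : Prop := exists L, is_boundary L g.

Lemma in_face_iff y u x w : in_face y (u, x, w) = true <-> y = u \/ y = x \/ y = w.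
Proof.
  simpl. rewrite !orb_true_iff.
  destruct (veqbP y u), (veqbP y x), (veqbP y w); intuition congruence.
Qed.

Lemma face_boundary_at_edge a b u x w : tri u x w -> a <> b ->
  xorb (edge_eqb a b u x) (xorb (edge_eqb a b x w) (edge_eqb a b u w))
  = in_face a (u, x, w) && in_face b (u, x, w).
Proof.
  intros T Hab. destruct (face_distinct _ _ _ T) as [H1 [H2 H3]].
  unfold edge_eqb, in_face. decide_veqb.
Qed.

Lemma face_through_edge a b c d u x w : tri u x w -> tri a b c -> tri a b d -> c <> d ->
  in_face a (u, x, w) = true -> in_face b (u, x, w) = true ->
  xorb (in_face c (u, x, w)) (in_face d (u, x, w)) = true.
Proof.
  intros T Tc Td Hcd Ha Hb.
  assert (He : exists e, tri a b e /\
    forall y, (y = u \/ y = x \/ y = w) <-> (y = a \/ y = b \/ y = e)).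
  { apply in_face_iff in Ha, Hb. destruct (face_distinct _ _ _ Tc) as [Hab _].
    pose proof (face_swap12 _ _ _ T). pose proof (face_swap23 _ _ _ T).
    pose proof (face_swap13 _ _ _ T). pose proof (face_swap12 _ _ _ (face_swap23 _ _ _ T)).
    pose proof (face_swap23 _ _ _ (face_swap12 _ _ _ T)).
    destruct Ha as [-> | [-> | ->]], Hb as [-> | [-> | ->]]; try congruence;
      [exists w | exists x | exists w | exists u | exists x | exists u];
      (split; [assumption | intro y; tauto]). }
  destruct He as [e [Te He]].
  destruct (face_distinct _ _ _ Tc) as [? [? ?]]. destruct (face_distinct _ _ _ Td) as [? [? ?]].
  assert (Ic : in_face c (u, x, w) = true <-> c = e)
    by (rewrite in_face_iff, He; intuition congruence).
  assert (Id : in_face d (u, x, w) = true <-> d = e)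
    by (rewrite in_face_iff, He; intuition congruence).
  destruct (edge_faces_exact _ _ _ _ Tc Td Hcd e Te) as [<-|<-].
  - rewrite (proj2 Ic eq_refl). destruct (in_face d (u, x, w)) eqn:E; auto.
    exfalso. apply Hcd. symmetry. apply Id. reflexivity.
  - rewrite (proj2 Id eq_refl). destruct (in_face c (u, x, w)) eqn:E; auto.
    exfalso. apply Hcd, Ic. reflexivity.
Qed.

(* The one-face chain [[(u, x, w)]] bounds the closed walk u x w u. *)
Lemma face_boundary_coef a b c d u x w : tri u x w -> tri a b c -> tri a b d -> c <> d ->
  xorb (edge_eqb a b u x) (xorb (edge_eqb a b x w) (edge_eqb a b u w))
  = xorb (face_eqb a b c (u, x, w)) (face_eqb a b d (u, x, w)).
Proof.
  intros T Tc Td Hcd. rewrite face_boundary_at_edge; auto; [|apply (face_distinct _ _ _ Tc)].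
  unfold face_eqb.
  destruct (in_face a (u, x, w)) eqn:Ea, (in_face b (u, x, w)) eqn:Eb; simpl; auto.
  symmetry. apply (face_through_edge a b c d u x w); auto.
Qed.

Lemma null_homologous_move g g' :
  walk_move V adj tri g g' -> (null_homologous g <-> null_homologous g').
Proof.
  intro M. destruct M as [l1 l2 u w Huw|l1 l2 u x w T]; simpl app.
  - assert (E : forall a b,
      edge_parity a b (l1 ++ u :: l2) = edge_parity a b (l1 ++ u :: w :: u :: l2)).
    { intros a b. rewrite (edge_parity_app a b l1 u l2), (edge_parity_app a b l1 u (w :: u :: l2)).
      rewrite !edge_parity_cons2.
      replace (edge_eqb a b w u) with (edge_eqb a b u w) by apply orb_comm.
      destruct (edge_eqb a b u w), (edge_parity a b (l1 ++ [u])), (edge_parity a b (u :: l2));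
        reflexivity. }
    split; intros [L HL]; exists L; intros a b c d Tc Td Hcd;
      [rewrite <- E | rewrite E]; auto.
  - assert (E : forall a b, edge_parity a b (l1 ++ u :: x :: w :: l2) =
      xorb (edge_parity a b (l1 ++ u :: w :: l2))
           (xorb (edge_eqb a b u x) (xorb (edge_eqb a b x w) (edge_eqb a b u w)))).
    { intros a b.
      rewrite (edge_parity_app a b l1 u (x :: w :: l2)), (edge_parity_app a b l1 u (w :: l2)).
      rewrite !edge_parity_cons2.
      destruct (edge_eqb a b u w), (edge_eqb a b u x), (edge_eqb a b x w),
        (edge_parity a b (l1 ++ [u])), (edge_parity a b (w :: l2)); reflexivity. }
    split; intros [L HL]; exists ((u, x, w) :: L); intros a b c d Tc Td Hcd; simpl chain_coef;
      pose proof (HL a b c d Tc Td Hcd) as H;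
      pose proof (face_boundary_coef a b c d u x w T Tc Td Hcd) as F; rewrite E in *.
    + rewrite H, F.
      destruct (chain_coef L a b c), (chain_coef L a b d),
        (face_eqb a b c (u, x, w)), (face_eqb a b d (u, x, w)); reflexivity.
    + rewrite F in H.
      destruct (edge_parity a b (l1 ++ u :: w :: l2)), (chain_coef L a b c), (chain_coef L a b d),
        (face_eqb a b c (u, x, w)), (face_eqb a b d (u, x, w)); simpl in *; congruence.
Qed.

Lemma null_homologous_homotopic g g' :
  walk_homotopic adj tri g g' -> (null_homologous g <-> null_homologous g').
Proof. induction 1; [apply null_homologous_move; auto | tauto | tauto | tauto]. Qed.

Lemma chain_coef_12 L a b c : chain_coef L a b c = chain_coef L b a c.
Proof.
  induction L as [|t L IH]; simpl; auto. rewrite IH. unfold face_eqb.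
  destruct (in_face a t), (in_face b t); reflexivity.
Qed.

Lemma chain_coef_23 L a b c : chain_coef L a b c = chain_coef L a c b.
Proof.
  induction L as [|t L IH]; simpl; auto. rewrite IH. unfold face_eqb.
  destruct (in_face a t), (in_face b t), (in_face c t); reflexivity.
Qed.

Lemma chain_coef_13 L a b c : chain_coef L a b c = chain_coef L c b a.
Proof. rewrite chain_coef_23, chain_coef_12, chain_coef_23. reflexivity. Qed.

Definition chain_support (L : list (V * V * V)) : list V :=
  flat_map (fun t => let '(u, x, w) := t in [u; x; w]) L.

Lemma chain_coef_support L a b c : chain_coef L a b c = true -> In a (chain_support L).
Proof.
  induction L as [|[[u x] w] L IH]; simpl chain_coef; [discriminate|].
  intro H. change (In a ([u; x; w] ++ chain_support L)). apply in_or_app.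
  destruct (face_eqb a b c (u, x, w)) eqn:E.
  - left. unfold face_eqb in E. apply andb_true_iff in E as [[E _]%andb_true_iff _].
    apply in_face_iff in E. simpl. intuition.
  - right. apply IH, H.
Qed.

Section Star.
Variables (g : list V) (L : list (V * V * V)).
Hypothesis L_bounds : is_boundary L g.

Definition star_coef (x : V) (s : bool) : Prop := forall p q, tri x p q -> chain_coef L x p q = s.

Lemma chain_coef_off_walk x p q q' : ~ In x g -> tri x p q -> tri x p q' ->
  chain_coef L x p q = chain_coef L x p q'.
Proof.
  intros Hx T T'. destruct (classic (q = q')) as [->|Hq]; auto.
  pose proof (L_bounds x p q q' T T' Hq) as H. rewrite edge_parity_notin in H; auto.
  destruct (chain_coef L x p q), (chain_coef L x p q'); simpl in H; congruence.
Qed.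

(* Going around the link of x, consecutive faces share an edge not on g. *)
Lemma star_coef_off_walk x p q : ~ In x g -> tri x p q -> star_coef x (chain_coef L x p q).
Proof.
  intros Hx T p' q' T'.
  pose proof (clos_rt_rt1n _ _ _ _ (link_connected x p p' (proj1 (face_edges _ _ _ T))
    (proj1 (face_edges _ _ _ T')))) as C.
  revert q q' T T'. induction C as [a|a y b Ty C IH]; intros c d Tc Td.
  - symmetry. apply chain_coef_off_walk; auto.
  - rewrite (chain_coef_off_walk x a c y Hx Tc Ty), (chain_coef_23 L x a y).
    apply IH; auto. apply face_swap23; auto.
Qed.

Lemma star_coef_adj x y s : ~ In y g -> adj x y -> star_coef x s -> star_coef y s.
Proof.
  intros Hy A Sx. destruct (face_of_edge x y A) as [c T].
  pose proof (star_coef_off_walk y x c Hy (face_swap12 _ _ _ T)) as H.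
  rewrite <- chain_coef_12, (Sx y c T) in H. exact H.
Qed.

Lemma star_coef_connected x y s : connected_off g x y -> star_coef x s -> star_coef y s.
Proof.
  induction 1 as [x y [A [_ Hy]]| |]; auto. intro; apply star_coef_adj with x; auto.
Qed.

(* L has finite support, so a ray avoiding g eventually leaves it. *)
Lemma ray_not_inside r : ray r -> (forall i, ~ In (r i) g) -> ~ star_coef (r 0) true.
Proof.
  intros [Hinj Hadj] Hr S0.
  assert (Sr : forall i, star_coef (r i) true).
  { induction i; auto. apply star_coef_adj with (r i); auto. }
  apply (injective_not_in_list _ r (chain_support L) Hinj). intro i.
  destruct (face_of_edge _ _ (Hadj i)) as [c T].
  apply (chain_coef_support L (r i) (r (S i)) c), Sr, T.
Qed.

Lemma chain_coef_avoiding_ray x p q : tri x p q -> avoiding_ray g x ->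
  chain_coef L x p q = false.
Proof.
  intros T [r [H0 [R Hr]]].
  destruct (chain_coef L x p q) eqn:E; auto. exfalso.
  apply (ray_not_inside r R Hr). rewrite H0, <- E.
  apply star_coef_off_walk; auto. rewrite <- H0; auto.
Qed.

Lemma link_coef_step v s t : (forall t, tri v (s t) (s (S t))) -> s (S (S t)) <> s t ->
  edge_parity v (s (S t)) g =
    xorb (chain_coef L v (s t) (s (S t))) (chain_coef L v (s (S t)) (s (S (S t)))).
Proof.
  intros T NB. rewrite (L_bounds v (s (S t)) (s t) (s (S (S t)))), chain_coef_23; auto.
  apply face_swap23; auto.
Qed.

(* Turning around v, the face coefficient changes exactly across the edges
   vw that g crosses an odd number of times. *)
Lemma link_coef_flip v s A B i al :
  (forall t, tri v (s t) (s (S t))) -> (forall t, s (S (S t)) <> s t) ->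
  (forall w, edge_parity v w g = xorb (veqb w A) (veqb w B)) -> A <> B -> s al = A ->
  (forall t, i < t < al -> s t <> A /\ s t <> B) -> i < al ->
  chain_coef L v (s i) (s (S i)) = negb (chain_coef L v (s al) (s (S al))).
Proof.
  intros T NB Hcross HAB Hal Hbetween Hi.
  destruct al as [|a]; [lia|].
  assert (Hd : forall d t, t + d = a -> i <= t ->
            chain_coef L v (s t) (s (S t)) = negb (chain_coef L v (s (S a)) (s (S (S a))))).
  { induction d as [|d IH]; intros t Ht Hit.
    - rewrite Nat.add_0_r in Ht. subst t.
      pose proof (link_coef_step v s a T (NB a)) as H.
      assert (HA : veqb (s (S a)) A = true) by (rewrite Hal; apply veqb_refl).
      assert (HB : veqb (s (S a)) B = false) by (rewrite Hal; apply veqb_neq, HAB).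
      rewrite Hcross, HA, HB in H.
      destruct (chain_coef L v (s a) (s (S a))), (chain_coef L v (s (S a)) (s (S (S a))));
        simpl in *; congruence.
    - rewrite <- (IH (S t)) by lia.
      pose proof (link_coef_step v s t T (NB t)) as H.
      destruct (Hbetween (S t)) as [NA NBt]; [lia|].
      rewrite Hcross, (veqb_neq _ _ NA), (veqb_neq _ _ NBt) in H.
      destruct (chain_coef L v (s t) (s (S t))), (chain_coef L v (s (S t)) (s (S (S t))));
        simpl in *; congruence. }
  apply (Hd (a - i) i); lia.
Qed.

End Star.

Lemma closed_walk_null_homologous v l : walk adj (loop v l) -> null_homologous (loop v l).
Proof.
  intro W. apply (null_homologous_homotopic _ _ (simply_connected v l W)).
  exists []. intros a b c d _ _ _. reflexivity.
Qed.

(** * Distance to the base vertex *)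

Variable v0 : V.

Definition norm_of (v : V) : nat := epsilon (inhabits 0) (norm adj v0 v).

Lemma norm_of_spec v : norm adj v0 v (norm_of v).
Proof.
  unfold norm_of. apply epsilon_spec. destruct (ex_least _ (connected v0 v)) as [k [H1 H2]].
  exists k; split; auto.
Qed.

Lemma norm_of_within v : within adj (norm_of v) v0 v.
Proof. apply norm_of_spec. Qed.

Lemma norm_of_le v m : within adj m v0 v -> norm_of v <= m.
Proof.
  intro H. destruct (le_lt_dec (norm_of v) m); auto.
  exfalso. apply (proj2 (norm_of_spec v) m); auto.
Qed.

Lemma norm_iff v k : norm adj v0 v k <-> k = norm_of v.
Proof.
  split; [|intros ->; apply norm_of_spec].
  intros [H1 H2]. pose proof (norm_of_le _ _ H1).
  destruct (le_lt_dec k (norm_of v)); [lia|].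
  exfalso. apply (H2 (norm_of v)); auto. apply norm_of_within.
Qed.

Lemma norm_of_v0 : norm_of v0 = 0.
Proof. pose proof (norm_of_le v0 0 (within_refl _ _ _ _)); lia. Qed.

Lemma norm_of_eq0 v : norm_of v = 0 -> v = v0.
Proof.
  intro H. pose proof (norm_of_within v) as W. rewrite H in W.
  inversion W; auto.
Qed.

Lemma norm_of_adj u w : adj u w -> norm_of w <= S (norm_of u).
Proof. intro H. apply norm_of_le. apply within_snoc with u; auto. apply norm_of_within. Qed.

Lemma norm_of_pred v : 0 < norm_of v -> exists u, adj v u /\ S (norm_of u) = norm_of v.
Proof.
  intro H. pose proof (within_sym _ _ _ (norm_of_within v)) as W.
  destruct (norm_of v) as [|k] eqn:E; [lia|].
  inversion W as [|? ? y ? Hvy Hy]; subst.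
  - rewrite norm_of_v0 in E; discriminate.
  - exists y; split; auto.
    pose proof (norm_of_le y k (within_sym _ _ _ Hy)).
    pose proof (norm_of_adj _ _ (adj_sym _ _ Hvy)). lia.
Qed.

Lemma path_to_root v : 0 < norm_of v ->
  exists l, walk adj (v :: l ++ [v0]) /\ forall y, In y l -> norm_of y < norm_of v.
Proof.
  remember (norm_of v) as k eqn:Ek. revert v Ek.
  induction k as [k IH] using lt_wf_ind. intros v Ek Hk.
  destruct (norm_of_pred v) as [u [A E]]; [lia|].
  destruct (norm_of u) as [|m] eqn:Eu.
  - apply norm_of_eq0 in Eu. subst u. exists []. split; [split; auto; exact I|intros y []].
  - destruct (IH (norm_of u) ltac:(lia) u eq_refl ltac:(lia)) as [l [W Hl]].
    exists (u :: l). split; [split; auto|].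
    intros y [<-|Hy]; [|specialize (Hl y Hy)]; lia.
Qed.

Lemma path_from_root v : 0 < norm_of v ->
  exists l, walk adj (v0 :: l ++ [v]) /\ forall y, In y l -> norm_of y < norm_of v.
Proof.
  intro H. destruct (path_to_root v H) as [l [W Hl]].
  exists (rev l). split.
  - apply walk_rev in W. simpl in W. rewrite rev_app_distr in W. exact W.
  - intros y Hy. apply Hl, in_rev, Hy.
Qed.

Lemma neighbourhood_finite (l : list V) : exists l', forall u w, In u l -> adj u w -> In w l'.
Proof.
  induction l as [|a l [l' Hl']].
  - exists []. intros u w [].
  - destruct (locally_finite a) as [la Ha].
    exists (la ++ l'). intros u w [<-|Hu] Huw; apply in_or_app;
      [left; apply Ha | right; eauto]; auto.
Qed.

Lemma ball_finite k : exists l, forall v, norm_of v <= k -> In v l.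
Proof.
  induction k as [|k [l Hl]].
  - exists [v0]. intros v Hv. left. symmetry. apply norm_of_eq0. lia.
  - destruct (neighbourhood_finite l) as [l' Hl'].
    exists (l ++ l'). intros v Hv. apply in_or_app.
    destruct (le_lt_dec (norm_of v) k); [left; auto|right].
    destruct (norm_of_pred v) as [u [A E]]; [lia|].
    apply (Hl' u); [apply Hl; lia | auto].
Qed.

Lemma ray_unbounded p k : ray p -> exists i, k < norm_of (p i).
Proof.
  intros [Hinj _]. destruct (ball_finite k) as [l Hl].
  apply NNPP. intro Hno. apply (injective_not_in_list _ p l Hinj).
  intro i. apply Hl. destruct (le_lt_dec (norm_of (p i)) k); auto.
  exfalso. eauto.
Qed.

Definition outward_geodesics (u : V) : Prop :=
  forall k, exists w, norm_of w = norm_of u + k /\ within adj k u w.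

Lemma outward_geodesics_shorter u k w : within adj k u w -> norm_of w = norm_of u + k ->
  forall k', k' <= k -> exists w', norm_of w' = norm_of u + k' /\ within adj k' u w'.
Proof.
  intros W E k' Hk. destruct (within_split _ _ _ W k' Hk) as [w' [W1 W2]].
  exists w'; split; auto.
  pose proof (norm_of_le w' _ (within_app _ _ _ _ _ (norm_of_within u) W1)).
  pose proof (norm_of_le w _ (within_app _ _ _ _ _ (norm_of_within w') W2)). lia.
Qed.

Lemma outward_geodesics_root : outward_geodesics v0.
Proof.
  intro k. destruct (ball_finite k) as [l Hl]. destruct (infinite l) as [v Hv].
  assert (k < norm_of v) by (apply Nat.nle_gt; intro Hle; exact (Hv (Hl v Hle))).
  rewrite norm_of_v0.
  destruct (within_split _ _ _ (norm_of_within v) k) as [w [W1 W2]]; [lia|].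
  exists w; split; auto.
  pose proof (norm_of_le w _ W1).
  pose proof (norm_of_le v _ (within_app _ _ _ _ _ (norm_of_within w) W2)). lia.
Qed.

(* Koenig's lemma: the finitely many outward neighbours cannot all have bounded geodesics. *)
Lemma outward_geodesics_step u : outward_geodesics u ->
  exists u', adj u u' /\ norm_of u' = S (norm_of u) /\ outward_geodesics u'.
Proof.
  intro Hu. apply NNPP. intro Hno.
  destruct (locally_finite u) as [l Hl].
  destruct (list_uniform_bound _
    (fun x k => norm_of x = S (norm_of u) ->
       ~ exists w, norm_of w = norm_of x + k /\ within adj k x w) l)
    as [K HK].
  - intros x k k' Hb Hk Ex [w [E W]]. apply (Hb Ex).
    exact (outward_geodesics_shorter x k' w W E k Hk).
  - intros x Hx. apply NNPP. intro Hall. apply Hno. exists x. split; [apply Hl; auto|].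
    assert (Ex : norm_of x = S (norm_of u)) by (apply NNPP; intro; apply Hall; exists 0; tauto).
    split; auto. intro k. apply NNPP. intro Hk. apply Hall. exists k. auto.
  - destruct (Hu (S K)) as [w [E W]].
    inversion W as [|? ? y ? Huy Hyw]; subst.
    + lia.
    + pose proof (norm_of_adj _ _ Huy).
      pose proof (norm_of_le w _ (within_app _ _ _ _ _ (norm_of_within y) Hyw)).
      apply (HK y); [apply Hl; auto | lia | exists w; split; auto; lia].
Qed.

Lemma geodesic_ray : exists r : nat -> V, forall k, norm_of (r k) = k /\ adj (r k) (r (S k)).
Proof.
  destruct (choice (fun u u' => outward_geodesics u ->
    adj u u' /\ norm_of u' = S (norm_of u) /\ outward_geodesics u')) as [f Hf].
  { intro u. destruct (classic (outward_geodesics u)) as [H|H].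
    - destruct (outward_geodesics_step u H) as [u' Hu']. eauto.
    - exists u. tauto. }
  assert (Hr : forall k, outward_geodesics (Nat.iter k f v0) /\ norm_of (Nat.iter k f v0) = k).
  { induction k as [|k [G E]]; [split; [apply outward_geodesics_root|apply norm_of_v0]|].
    simpl. destruct (Hf _ G) as [_ [E' G']]. split; auto. lia. }
  exists (fun k => Nat.iter k f v0). intro k. split; [apply Hr|]. apply (Hf _ (proj1 (Hr k))).
Qed.

(** * The outer sphere *)

Variable n : nat.
Hypothesis n_pos : 0 < n.

Local Notation S_O := (outer_sphere adj v0 n).

Definition escapes (z : V) : Prop := exists p, p 0 = z /\ ray p /\ forall i, n < norm_of (p i).

Lemma escapes_norm z : escapes z -> n < norm_of z.
Proof. intros [p [<- [_ H]]]. apply H. Qed.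

Lemma escapes_adj x y : escapes x -> adj x y -> n < norm_of y -> escapes y.
Proof.
  intros [p [H0 [[Hinj Hadj] Hp]]] Hxy Hy.
  destruct (classic (exists k, p k = y)) as [[k Hk]|Hno].
  - exists (fun i => p (k + i)). rewrite Nat.add_0_r. repeat split; auto.
    + intros i i' E. apply Hinj in E. lia.
    + intro i. rewrite Nat.add_succ_r. apply Hadj.
  - exists (fun i => match i with 0 => y | S i => p i end). repeat split; auto.
    + intros [|i] [|i'] E; auto; exfalso; apply Hno; eauto.
    + intros [|i]; [rewrite H0; auto | apply Hadj].
    + intros [|i]; auto.
Qed.

Lemma escapes_avoiding g z : escapes z -> (forall w, In w g -> norm_of w <= n) ->
  avoiding_ray g z.
Proof.
  intros [p [H0 [R Hp]]] Hg. exists p. split; [|split]; auto.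
  intros k Hk. specialize (Hg _ Hk). specialize (Hp k). lia.
Qed.

(* Norms change by at most one along an edge, so a ray from v that never
   returns to norm n stays above n, as it cannot remain in the finite ball. *)
Lemma outer_sphere_iff v : S_O v <-> norm_of v = n /\ exists z, adj v z /\ escapes z.
Proof.
  split.
  - intros [Hv [p [H0 [Hinj [Hadj Hp]]]]].
    apply norm_iff in Hv. split; [symmetry; auto|].
    set (q i := p (S i)).
    assert (Rq : ray q) by (split; [intros i j E; apply Hinj in E; lia | intro; apply Hadj]).
    assert (Hstep : forall i, norm_of (q (S i)) <= S (norm_of (q i)) /\
                              norm_of (q i) <= S (norm_of (q (S i)))).
    { intro i. split; apply norm_of_adj; [|apply adj_sym]; apply Hadj. }
    assert (Hne : forall i, norm_of (q i) <> n).
    { intros i E. apply (Hp (S i)); [lia|]. apply norm_iff. symmetry; exact E. }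
    destruct (level_crossing (fun i => norm_of (q i)) n Hstep Hne) as [Above Below].
    destruct (Nat.lt_trichotomy (norm_of (q 0)) n) as [Hlt|[E|Hgt]].
    + exfalso. destruct (ray_unbounded q n Rq) as [i Hi]. specialize (Below Hlt i). lia.
    + contradiction (Hne 0 E).
    + exists (q 0). split; [rewrite <- H0; apply Hadj|].
      exists q. split; [reflexivity | split; auto].
  - intros [Hv [z [Hz [p [H0 [[Hinj Hadj] Hp]]]]]].
    split; [apply norm_iff; symmetry; auto|].
    exists (fun i => match i with 0 => v | S i => p i end). repeat split; auto.
    + assert (Hpv : forall i, p i <> v) by (intros i E; specialize (Hp i); rewrite E in Hp; lia).
      intros [|i] [|j] E; auto.
      * contradiction (Hpv j). auto.
      * contradiction (Hpv i).
    + intros [|i]; [rewrite H0; auto | apply Hadj].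
    + intros [|i] Hi; [lia|]. intro E. apply norm_iff in E. specialize (Hp i). lia.
Qed.

Lemma outer_sphere_nonempty : exists v, S_O v.
Proof.
  destruct geodesic_ray as [r Hr].
  exists (r n). apply outer_sphere_iff. split; [apply Hr|].
  exists (r (S n)). split; [apply Hr|].
  exists (fun i => r (S n + i)). rewrite Nat.add_0_r. repeat split; auto.
  - intros i j E. pose proof (proj1 (Hr (S n + i))) as Hi. rewrite E, (proj1 (Hr _)) in Hi. lia.
  - intro i. rewrite Nat.add_succ_r. apply Hr.
  - intro i. rewrite (proj1 (Hr _)). lia.
Qed.

Lemma outer_sphere_finite : exists l, forall v, S_O v <-> In v l.
Proof.
  destruct (ball_finite n) as [l Hl].
  exists (filter (fun x => if excluded_middle_informative (S_O x) then true else false) l).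
  intro v. rewrite filter_In. destruct (excluded_middle_informative (S_O v)) as [H|H].
  - split; auto. intros _. split; auto. apply Hl. apply outer_sphere_iff in H. lia.
  - split; [intro; contradiction | intros [_ E]; discriminate].
Qed.

Lemma outer_sphere_of_boundary u z : adj u z -> escapes z -> ~ escapes u -> S_O u.
Proof.
  intros A Ez Nu. apply outer_sphere_iff. split; [|eauto].
  pose proof (escapes_norm z Ez). pose proof (norm_of_adj _ _ A).
  destruct (Nat.lt_ge_cases n (norm_of u)) as [Hgt|Hle].
  - contradiction Nu. apply escapes_adj with z; auto.
  - lia.
Qed.

Lemma link_enumeration v z : adj v z -> exists s j, s 0 = z /\ cycle_of (adj v) (tri v) s j /\
  forall w, adj v w -> exists t, t < j /\ s t = w.
Proof.
  intro Az. destruct (face_of_edge v z Az) as [c Tc].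
  destruct (two_regular_cycle V (adj v) (tri v)) with (x0 := z) (x1 := c) as [s [j [S0 Cyc]]]; auto.
  - intros a b T. apply face_swap23, T.
  - intros a T. exact (proj1 (proj2 (face_distinct _ _ _ T)) eq_refl).
  - destruct (locally_finite v) as [l Hl]. exists l. intros x Hx. apply Hl, Hx.
  - intros x Hx. destruct (edge_faces v x Hx) as [c1 [d1 [Hcd [T1 [T2 Hex]]]]].
    exists c1, d1. repeat split; auto; [apply (face_edges _ _ _ T1) | apply (face_edges _ _ _ T2)].
  - apply (face_edges _ _ _ Tc).
  - exists s, j. split; [exact S0 | split; [exact Cyc|]].
    intros w Aw. pose proof (clos_rt_rt1n _ _ _ _ (link_connected v z w Az Aw)) as C.
    assert (Hz : exists t, t < j /\ s t = z)
      by (exists 0; split; [pose proof (cycle_len Cyc); lia | auto]).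
    revert Hz. generalize z C. clear - Cyc face_edges. intros y C.
    induction C as [y|y y' w T C IH]; auto. intros [t [_ Ht]].
    apply IH, (cycle_closed Cyc t y'); [rewrite Ht; auto|]. apply (face_edges _ _ _ T).
Qed.

(* The link of v listed cyclically from an escaping neighbour [s 0]: the
   non-escaping neighbours form the arc [be, al], whose ends lie on S_O. *)
Record outer_link (v : V) (s : nat -> V) (j al be : nat) : Prop := {
  link_face : forall t, tri v (s t) (s (S t));
  link_nobacktrack : forall t, s (S (S t)) <> s t;
  link_inj : forall t t', t < j -> t' < j -> s t = s t' -> t = t';
  link_covers : forall w, adj v w -> exists t, t < j /\ s t = w;
  link_order : be < al < j;
  link_escapes : escapes (s (S al));
  link_outer_al : S_O (s al);
  link_outer_be : S_O (s be);
  link_arc : forall t, t < j -> ~ escapes (s t) -> be <= t <= al }.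

Arguments link_face {v s j al be}. Arguments link_nobacktrack {v s j al be}.
Arguments link_inj {v s j al be}. Arguments link_covers {v s j al be}.
Arguments link_order {v s j al be}. Arguments link_escapes {v s j al be}.
Arguments link_outer_al {v s j al be}. Arguments link_outer_be {v s j al be}.
Arguments link_arc {v s j al be}.

Lemma outer_link_exists v : S_O v -> exists s j al be, outer_link v s j al be.
Proof.
  intro Hv. apply outer_sphere_iff in Hv as [Nv [z [Az Ez]]].
  destruct (link_enumeration v z Az) as [s [j [S0 [Cyc Cov]]]].
  destruct (norm_of_pred v) as [m [Am Em]]; [lia|].
  destruct (Cov m Am) as [tm [Htm <-]].
  assert (NEm : ~ escapes (s tm)) by (intro E; apply escapes_norm in E; lia).
  destruct (ex_least (fun t => t < j /\ ~ escapes (s t))) as [be [[Hbe NEbe] Mbe]]; [eauto|].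
  destruct (ex_greatest_below (fun t => ~ escapes (s t)) j) as [al [Hal [NEal Mal]]]; [eauto|].
  destruct be as [|b]; [rewrite S0 in NEbe; contradiction|].
  assert (Earc : forall t, t < j -> ~ escapes (s t) -> S b <= t <= al).
  { intros t Ht Et. split.
    - destruct (Nat.lt_ge_cases t (S b)); auto. exfalso. apply (Mbe t); auto.
    - destruct (Nat.lt_ge_cases al t); [|lia]. exfalso. apply (Mal t); auto. }
  assert (Esal : escapes (s (S al))).
  { destruct (Nat.eq_dec (S al) j) as [E|E].
    - rewrite E. pose proof (cycle_period Cyc 0) as P0. simpl in P0. rewrite P0, S0. auto.
    - apply NNPP. intro H. apply (Mal (S al)); auto. lia. }
  assert (Esb : escapes (s b)) by (apply NNPP; intro H; apply (Mbe b); [lia | split; auto; lia]).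
  assert (Oal : S_O (s al)).
  { apply outer_sphere_of_boundary with (s (S al)); auto.
    apply (face_edges _ _ _ (cycle_step Cyc al)). }
  assert (Obe : S_O (s (S b))).
  { apply outer_sphere_of_boundary with (s b); auto.
    apply adj_sym, (face_edges _ _ _ (cycle_step Cyc b)). }
  exists s, j, al, (S b). constructor; auto.
  - exact (cycle_step Cyc).
  - exact (cycle_nobacktrack Cyc).
  - exact (cycle_inj Cyc).
  - destruct (Earc tm Htm NEm). split; [|auto].
    assert (tm <> S b); [|lia]. intros ->. apply outer_sphere_iff in Obe. lia.
Qed.

(* Take a mod-2 filling of the loop.  The face at the escaping s (S al) is
   outside it; turning around v, the loop is crossed once at s al, so s i is
   inside, and so is everything joined to s i off the loop. *)
Lemma outer_link_trapped v s j al be p i y :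
  outer_link v s j al be -> norm_of v = n -> walk adj (loop v p) ->
  (forall w, In w p -> norm_of w <= n) ->
  (forall w, edge_parity v w (loop v p) = xorb (veqb w (s al)) (veqb w (s be))) ->
  be < i < al -> ~ In (s i) (loop v p) ->
  connected_off (loop v p) (s i) y -> ~ escapes y.
Proof.
  intros Lk Nv W Hp Hcross Hi Hsi C Ey.
  pose proof (link_order Lk) as Hord.
  assert (Hg : forall w, In w (loop v p) -> norm_of w <= n)
    by (intros w Hw; apply in_loop in Hw as [->|Hw]; auto; lia).
  destruct (closed_walk_null_homologous v p W) as [L HL].
  assert (Hout : chain_coef L v (s al) (s (S al)) = false).
  { rewrite chain_coef_13, chain_coef_23. apply (chain_coef_avoiding_ray _ L HL).
    - apply face_swap23, face_swap13, (link_face Lk).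
    - apply escapes_avoiding; auto. apply (link_escapes Lk). }
  assert (Hin : chain_coef L v (s i) (s (S i)) = true).
  { rewrite (link_coef_flip _ L HL v s (s al) (s be) i al (link_face Lk) (link_nobacktrack Lk)),
      Hout; auto; try lia.
    - intro E. apply (link_inj Lk) in E; lia.
    - intros t Ht. split; intro E; apply (link_inj Lk) in E; lia. }
  assert (Sin : star_coef L (s i) true).
  { rewrite <- Hin, chain_coef_12. apply star_coef_off_walk with (loop v p); auto.
    apply face_swap12, (link_face Lk). }
  destruct (escapes_avoiding _ y Ey Hg) as [r [R0 [R Hr]]].
  apply (ray_not_inside _ L HL r R Hr). rewrite R0.
  apply (star_coef_connected _ L HL (s i)); auto.
Qed.

Lemma loop_through_root v a b : norm_of v = n -> adj v a -> adj v b ->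
  norm_of a = n -> norm_of b = n ->
  exists M, walk adj (loop v (a :: M ++ [b])) /\ ~ In v (a :: M ++ [b]) /\
    forall u, In u M -> norm_of u < n.
Proof.
  intros Nv Aa Ab Na Nb.
  destruct (path_to_root a) as [la [Wa Hla]]; [lia|].
  destruct (path_from_root b) as [lb [Wb Hlb]]; [lia|].
  assert (HM : forall u, In u (la ++ v0 :: lb) -> norm_of u < n).
  { intros u Hu. apply in_app_iff in Hu as [Hu|[<-|Hu]];
      [specialize (Hla u Hu) | rewrite norm_of_v0 | specialize (Hlb u Hu)]; lia. }
  exists (la ++ v0 :: lb). split; [|split; auto].
  - apply loop_walk; auto.
    replace (a :: (la ++ v0 :: lb) ++ [b]) with ((a :: la) ++ v0 :: (lb ++ [b]))
      by (simpl; rewrite <- app_assoc; reflexivity).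
    apply walk_app; auto.
  - intro Hv. apply in_arc in Hv as [E|[E|Hv]];
      [subst a | subst b | specialize (HM v Hv); lia]; exact (adj_irrefl v ltac:(assumption)).
Qed.

(* An outer neighbour strictly inside the arc would be trapped by the loop
   through v, s al, v0 and s be, yet it is adjacent to an escaping vertex. *)
Lemma outer_link_neighbours v s j al be : S_O v -> outer_link v s j al be ->
  forall c, adj v c -> S_O c -> c = s al \/ c = s be.
Proof.
  intros Ov Lk c Ac Oc. apply outer_sphere_iff in Ov as [Nv _].
  destruct (link_covers Lk c Ac) as [i [Hi <-]].
  apply outer_sphere_iff in Oc as [Nc [zc [Azc Ezc]]].
  pose proof (link_order Lk) as Hord.
  destruct (link_arc Lk i Hi) as [R1 R2]; [intro E; apply escapes_norm in E; lia|].
  destruct (Nat.eq_dec i al) as [->|Hia]; auto.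
  destruct (Nat.eq_dec i be) as [->|Hib]; auto.
  exfalso.
  destruct (proj1 (outer_sphere_iff (s al)) (link_outer_al Lk)) as [Na _].
  destruct (proj1 (outer_sphere_iff (s be)) (link_outer_be Lk)) as [Nb _].
  assert (Av : forall t, adj v (s t)) by (intro t; apply (face_edges _ _ _ (link_face Lk t))).
  destruct (loop_through_root v (s al) (s be) Nv (Av al) (Av be) Na Nb) as [M [W [Hv HM]]].
  assert (Hp : forall w, In w (s al :: M ++ [s be]) -> norm_of w <= n).
  { intros w Hw. apply in_arc in Hw as [->|[->|Hw]]; [lia | lia | specialize (HM w Hw); lia]. }
  assert (Hsi : ~ In (s i) (loop v (s al :: M ++ [s be]))).
  { intro Hw. apply in_loop in Hw as [E|Hw]; [apply (adj_irrefl v); rewrite <- E at 2; apply Av|].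
    apply in_arc in Hw as [E|[E|Hw]];
      [apply (link_inj Lk) in E | apply (link_inj Lk) in E | specialize (HM _ Hw)]; lia. }
  assert (Hzc : ~ In zc (loop v (s al :: M ++ [s be]))).
  { pose proof (escapes_norm zc Ezc).
    intro Hw. apply in_loop in Hw as [->|Hw]; [lia | specialize (Hp zc Hw); lia]. }
  apply (outer_link_trapped v s j al be (s al :: M ++ [s be]) i zc Lk Nv W Hp); auto.
  - apply loop_edge_parity, Hv.
  - lia.
  - apply rt_step. auto.
Qed.

Lemma outer_sphere_two_regular v : S_O v -> exists a b, a <> b /\ adj v a /\ adj v b /\
  S_O a /\ S_O b /\ forall c, adj v c -> S_O c -> c = a \/ c = b.
Proof.
  intro Ov. destruct (outer_link_exists v Ov) as [s [j [al [be Lk]]]].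
  pose proof (link_order Lk).
  exists (s al), (s be). split; [|split; [|split; [|split; [|split]]]].
  - intro E. apply (link_inj Lk) in E; lia.
  - apply (face_edges _ _ _ (link_face Lk al)).
  - apply (face_edges _ _ _ (link_face Lk be)).
  - apply (link_outer_al Lk).
  - apply (link_outer_be Lk).
  - apply (outer_link_neighbours v s j al be Ov Lk).
Qed.

Lemma outer_sphere_cycle_through x : S_O x -> exists a M b,
  a <> b /\ adj x a /\ adj x b /\ walk adj (loop x (a :: M ++ [b])) /\ ~ In x (a :: M ++ [b]) /\
  forall w, In w (a :: M ++ [b]) -> S_O w /\ joined_within S_O x w.
Proof.
  intro Ox. destruct (outer_sphere_two_regular x Ox) as [a [_ [_ [Aa [_ [Oa _]]]]]].
  destruct (two_regular_cycle V S_O adj) with (x0 := x) (x1 := a) as [u [J [U0 Cyc]]]; auto.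
  - destruct outer_sphere_finite as [l Hl]. exists l. intros z Hz. apply Hl, Hz.
  - exact outer_sphere_two_regular.
  - pose proof (cycle_len Cyc) as HJ. pose proof (cycle_inj Cyc) as Inj.
    assert (UJ : u J = x) by (rewrite <- U0; apply (cycle_period Cyc 0)).
    destruct J as [|[|[|k]]]; try lia.
    exists (u 1), (map u (seq 2 k)), (u (S (S k))).
    assert (Hp : u 1 :: map u (seq 2 k) ++ [u (S (S k))] = map u (seq 1 (S (S k)))).
    { rewrite seq_S, map_app. reflexivity. }
    assert (Hmem : forall w, In w (u 1 :: map u (seq 2 k) ++ [u (S (S k))]) ->
                    exists t, 1 <= t <= S (S k) /\ w = u t).
    { intros w Hw. rewrite Hp in Hw. apply in_map_iff in Hw as [t [<- Ht]].
      apply in_seq in Ht. exists t. split; auto. lia. }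
    split; [|split; [|split; [|split; [|split]]]].
    + intro E. apply Inj in E; lia.
    + rewrite <- U0. apply (cycle_step Cyc).
    + apply adj_sym. rewrite <- UJ. apply (cycle_step Cyc).
    + replace (loop x _) with (map u (seq 0 (S (S (S (S k))))));
        [exact (walk_map_seq u (cycle_step Cyc) _ 0)|].
      change (map u (seq 0 (S (S (S (S k)))))) with (u 0 :: map u (seq 1 (S (S (S k))))).
      rewrite seq_S, map_app, <- Hp, U0. simpl. rewrite UJ. reflexivity.
    + intro Hx. destruct (Hmem x Hx) as [t [Ht E]]. rewrite <- U0 in E. apply Inj in E; lia.
    + intros w Hw. destruct (Hmem w Hw) as [t [_ ->]]. split; [apply (cycle_in Cyc)|].
      rewrite <- U0. apply joined_within_seq; [apply (cycle_step Cyc) | apply (cycle_in Cyc)].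
Qed.

Lemma connected_off_through_root g x y : (forall w, In w g -> norm_of w = n) ->
  norm_of x < n -> norm_of y <= n -> ~ In y g -> connected_off g x y.
Proof.
  intros Hg Nx Ny Hy.
  assert (Off : forall w, norm_of w < n -> ~ In w g) by (intros w Hw H; specialize (Hg w H); lia).
  apply rt_trans with v0.
  - destruct (Nat.eq_dec (norm_of x) 0) as [E|E]; [apply norm_of_eq0 in E; subst; apply rt_refl|].
    destruct (path_to_root x) as [l [W Hl]]; [lia|].
    apply walk_connected_off with l; auto.
    intros z Hz. apply Off. destruct Hz as [<-|Hz]; auto.
    apply in_app_iff in Hz as [Hz|[<-|[]]]; [specialize (Hl z Hz); lia | rewrite norm_of_v0; lia].
  - destruct (Nat.eq_dec (norm_of y) 0) as [E|E]; [apply norm_of_eq0 in E; subst; apply rt_refl|].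
    destruct (path_from_root y) as [l [W Hl]]; [lia|].
    apply walk_connected_off with l; auto.
    intros z Hz. destruct Hz as [<-|Hz]; [apply Off; rewrite norm_of_v0; lia|].
    apply in_app_iff in Hz as [Hz|[<-|[]]]; auto. apply Off. specialize (Hl z Hz). lia.
Qed.

Lemma outer_link_loop_crossing v s j al be a M b : S_O v -> outer_link v s j al be ->
  ~ In v (a :: M ++ [b]) -> a <> b -> adj v a -> adj v b -> S_O a -> S_O b ->
  forall w, edge_parity v w (loop v (a :: M ++ [b])) = xorb (veqb w (s al)) (veqb w (s be)).
Proof.
  intros Ov Lk Hv Hab Aa Ab Oa Ob w. rewrite loop_edge_parity by exact Hv.
  destruct (outer_link_neighbours v s j al be Ov Lk a Aa Oa) as [-> | ->],
    (outer_link_neighbours v s j al be Ov Lk b Ab Ob) as [-> | ->];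
    try congruence. apply xorb_comm.
Qed.

(* If y were not joined to x, the cycle of S_O through x would trap the lower
   neighbour of x, which is joined through v0 to y and hence to an escaping vertex. *)
Lemma outer_sphere_connected x y : S_O x -> S_O y -> joined_within S_O x y.
Proof.
  intros Ox Oy. apply NNPP. intro Hxy.
  destruct (outer_sphere_cycle_through x Ox) as [a [M [b [Hab [Aa [Ab [W [Hx Hp]]]]]]]].
  destruct (outer_link_exists x Ox) as [s [j [al [be Lk]]]].
  pose proof (link_order Lk) as Hord.
  destruct (proj1 (outer_sphere_iff x) Ox) as [Nx _].
  assert (Hloop : forall w, In w (loop x (a :: M ++ [b])) ->
                   norm_of w = n /\ joined_within S_O x w).
  { intros w Hw. apply in_loop in Hw as [->|Hw]; [split; auto; exists []; repeat split; auto|].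
    destruct (Hp w Hw) as [Ow J]. split; auto. apply outer_sphere_iff, Ow. }
  assert (Hcross := outer_link_loop_crossing x s j al be a M b Ox Lk Hx Hab Aa Ab
    (proj1 (Hp a (proj2 (in_arc a b a M) (or_introl eq_refl))))
    (proj1 (Hp b (proj2 (in_arc a b b M) (or_intror (or_introl eq_refl)))))).
  destruct (norm_of_pred x) as [m [Am Em]]; [lia|].
  destruct (link_covers Lk m Am) as [i [Hi <-]].
  destruct (link_arc Lk i Hi) as [R1 R2]; [intro E; apply escapes_norm in E; lia|].
  destruct (proj1 (outer_sphere_iff (s al)) (link_outer_al Lk)) as [Na _].
  destruct (proj1 (outer_sphere_iff (s be)) (link_outer_be Lk)) as [Nb _].
  assert (Hial : i <> al) by (intros ->; lia). assert (Hibe : i <> be) by (intros ->; lia).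
  destruct (proj1 (outer_sphere_iff y) Oy) as [Ny [zy [Azy Ezy]]].
  assert (Hy : ~ In y (loop x (a :: M ++ [b]))) by (intro Hin; apply Hxy, (Hloop y Hin)).
  apply (outer_link_trapped x s j al be (a :: M ++ [b]) i zy Lk Nx W); auto.
  - intros w Hw. rewrite (proj1 (Hloop w (proj2 (in_loop _ _ w) (or_intror Hw)))). lia.
  - lia.
  - intro Hin. specialize (Hloop _ Hin). lia.
  - apply rt_trans with y.
    + apply connected_off_through_root; auto; [intros w Hw; apply Hloop, Hw | lia | lia].
    + apply rt_step. repeat split; auto.
      intro Hin. pose proof (escapes_norm zy Ezy). specialize (Hloop _ Hin). lia.
Qed.

Lemma outer_sphere_cycle_graph : induced_cycle_graph adj S_O.
Proof.
  split; [exact outer_sphere_finite|].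
  split; [exact outer_sphere_nonempty|].
  split; [exact outer_sphere_connected | exact outer_sphere_two_regular].
Qed.

End DiskTriangulation.

Theorem mainTheorem14 (V : Type) (adj : V -> V -> Prop) (tri : V -> V -> V -> Prop)
  (v0 : V) (Htri : disk_triangulation adj tri) (n : nat) (Hn : 0 < n) :
  induced_cycle_graph adj (outer_sphere adj v0 n).
Proof.
  destruct Htri as (Hsym & Hirr & Hedges & Hperm & Hfaces & Hfin & Hlink & _ & Hconn & Hinf & Hsc).
  exact (outer_sphere_cycle_graph V adj tri Hsym Hirr Hedges Hperm Hfaces Hfin Hlink
    Hconn Hinf Hsc v0 n Hn).
Qed.
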